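(* Let $\mathfrak f$ be the free complex Lie algebra on $m$ generators $x_1,\dots,x_m$, $V=\langle x_1,\dots,x_m\rangle$, $\mathfrak f=\bigoplus_{n\ge1}\mathfrak f_n$ its degree decomposition, and $\mathfrak f_{\ge k}=\bigoplus_{n\ge k}\mathfrak f_n$. (1) If $\mathfrak h\subset\mathfrak f$ is a verbal ideal containing $\mathfrak f_{\ge\nu+1}$, then the ideal $\mathfrak h/\mathfrak f_{\ge\nu+1}\subset\mathfrak f/\mathfrak f_{\ge\nu+1}=\mathfrak n_{m,\nu}$ is $\mathrm{GL}(V)$-invariant. (2) If all multiplicities $m_\lambda$ in the decomposition $\mathfrak f/\mathfrak f_{\ge\nu+1}=\bigoplus m_\lambda V_\lambda$ into irreducible $\mathrm{GL}(V)$-representations are at most $1$, then there are only finitely many verbal ideals $\mathfrak h\subset\mathfrak f$ containing $\mathfrak f_{\ge\nu+1}$. (3) The verbal ideals $\mathfrak h\subset\mathfrak f$ with $\mathfrak f_{\ge\nu+1}\subset\mathfrak h\subset\mathfrak f_{\ge\nu}$ are precisely the ideals of the form $U\oplus\mathfrak f_{\ge\nu+1}$ with $U$ a $\mathrm{GL}(V)$-invariant subspace of $\mathfrak f_\nu$.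
   Context: An ideal $\mathfrak h$ of $\mathfrak f$ is verbal if $\varphi(\mathfrak h)\subset\mathfrak h$ for every Lie algebra endomorphism $\varphi$ of $\mathfrak f$. $\mathrm{GL}(V)$ acts on $\mathfrak f$ by extending linear automorphisms of $V$ to Lie algebra automorphisms; this preserves each $\mathfrak f_n$. $V_\lambda$ denotes the irreducible polynomial $\mathrm{GL}(V)$-representation of highest weight $\lambda$. $\mathfrak n_{m,\nu}$ is the free $\nu$-step nilpotent Lie algebra on $m$ generators. *)

From HB Require Import structures.
From mathcomp Require Import all_boot all_algebra.
From mathcomp Require Import complex.
From mathcomp Require Import reals Rstruct.
Set Implicit Arguments.
Unset Strict Implicit.
Unset Printing Implicit Defensive.
Import GRing.Theory.
Local Open Scope ring_scope.

Notation C := (Rdefinitions.R)[i].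

(* Words in the letters x_1, ..., x_m and (noncommutative formal) series
   sum_w a(w) w over C: the free associative algebra C<<x_1..x_m>> (completed).
   The free Lie algebra is realised as the Lie subalgebra generated by the
   x_i (it consists of polynomials). *)
Definition word (m : nat) := seq 'I_m.
Definition series (m : nat) := word m -> C.

Definition szero (m : nat) : series m := fun _ => 0.
Definition sadd (m : nat) (a b : series m) : series m := fun w => a w + b w.
Definition sscale (m : nat) (c : C) (a : series m) : series m := fun w => c * a w.
Definition ssub (m : nat) (a b : series m) : series m := fun w => a w - b w.
Definition smul (m : nat) (a b : series m) : series m :=
  fun w => \sum_(i < (size w).+1) a (take i w) * b (drop i w).
Definition sbr (m : nat) (a b : series m) : series m := ssub (smul a b) (smul b a).
Definition sgen (m : nat) (i : 'I_m) : series m :=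
  fun w => if w == [:: i] then 1 else 0.

Inductive free_lie (m : nat) : series m -> Prop :=
| fl_gen (i : 'I_m) : free_lie (sgen i)
| fl_zero : free_lie (@szero m)
| fl_add (a b : series m) : free_lie a -> free_lie b -> free_lie (sadd a b)
| fl_scale (c : C) (a : series m) : free_lie a -> free_lie (sscale c a)
| fl_br (a b : series m) : free_lie a -> free_lie b -> free_lie (sbr a b).

Definition psubset (m : nat) (S T : series m -> Prop) := forall a, S a -> T a.

Definition fdeg (m n : nat) (a : series m) : Prop :=
  free_lie a /\ forall w : word m, size w != n -> a w = 0.

Definition fge (m k : nat) (a : series m) : Prop :=
  free_lie a /\ forall w : word m, (size w < k)%N -> a w = 0.

(* (+)_{n <= nu} f_n, the canonical graded model of f / f_{>= nu+1} *)
Definition ftrunc (m nu : nat) (a : series m) : Prop :=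
  free_lie a /\ forall w : word m, (nu < size w)%N -> a w = 0.

Definition is_subspace (m : nat) (S : series m -> Prop) : Prop :=
  [/\ S (@szero m),
      forall a b, S a -> S b -> S (sadd a b)
    & forall c a, S a -> S (sscale c a)].

Definition is_ideal (m : nat) (h : series m -> Prop) : Prop :=
  [/\ is_subspace h, psubset h (@free_lie m)
    & forall a b, free_lie a -> h b -> h (sbr a b)].

Definition lie_endo (m : nat) (phi : series m -> series m) : Prop :=
  [/\ forall a, free_lie a -> free_lie (phi a),
      forall a b, free_lie a -> free_lie b -> phi (sadd a b) = sadd (phi a) (phi b),
      forall c a, free_lie a -> phi (sscale c a) = sscale c (phi a)
    & forall a b, free_lie a -> free_lie b -> phi (sbr a b) = sbr (phi a) (phi b)].

Definition verbal (m : nat) (h : series m -> Prop) : Prop :=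
  is_ideal h /\ forall phi, lie_endo phi -> forall a, h a -> h (phi a).

(* GL(V) acting on C<<x>> by the algebra automorphism extending
   x_i |-> sum_j g_(j,i) x_j ; coefficientwise:
   (g.a)(w) = sum_{|u| = |w|} a(u) prod_k g_(w_k, u_k). *)
Definition gl_act (m : nat) (g : 'M[C]_m) (a : series m) : series m :=
  fun w => \sum_(u : (size w).-tuple 'I_m)
             a (tval u) * \prod_(k < size w) g (tnth (in_tuple w) k) (tnth u k).

Definition gl_invariant (m : nat) (S : series m -> Prop) : Prop :=
  forall g : 'M[C]_m, g \in unitmx -> forall a, S a -> S (gl_act g a).

Definition gl_irreducible (m : nat) (W : series m -> Prop) : Prop :=
  [/\ is_subspace W, gl_invariant W, (exists2 a, W a & a <> @szero m)
    & forall U, is_subspace U -> gl_invariant U -> psubset U W ->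
        psubset U (fun a => a = @szero m) \/ psubset W U].

Definition gl_isomorphic (m : nat) (W1 W2 : series m -> Prop) : Prop :=
  exists phi : series m -> series m,
   [/\ forall a, W1 a -> W2 (phi a),
       forall a b, W1 a -> W1 b -> phi (sadd a b) = sadd (phi a) (phi b),
       forall c a, W1 a -> phi (sscale c a) = sscale c (phi a),
       (forall a b, W1 a -> W1 b -> phi a = phi b -> a = b) /\
       (forall b, W2 b -> exists2 a, W1 a & phi a = b)
     & forall g : 'M[C]_m, g \in unitmx -> forall a, W1 a ->
         phi (gl_act g a) = gl_act g (phi a)].

(* M decomposes as a direct sum of irreducible GL(V)-representations,
   no two of which are isomorphic (all multiplicities m_lambda <= 1). *)
Definition multiplicity_free (m : nat) (M : series m -> Prop) : Prop :=
  exists (k : nat) (W : 'I_k -> series m -> Prop),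
   [/\ forall i, gl_irreducible (W i) /\ psubset (W i) M,
       forall t, M t -> (exists2 ws : 'I_k -> series m,
           (forall i, W i (ws i)) & t = \big[@sadd m/@szero m]_(i < k) ws i),
       forall ws : 'I_k -> series m, (forall i, W i (ws i)) ->
           \big[@sadd m/@szero m]_(i < k) ws i = @szero m -> forall i, ws i = @szero m
     & forall i j, i != j -> ~ gl_isomorphic (W i) (W j)].

From HB Require Import structures.
From mathcomp Require Import all_boot all_algebra.
From mathcomp Require Import complex.
From mathcomp Require Import reals Rstruct.
From mathcomp Require Import zify.
From Stdlib Require Import FunctionalExtensionality ClassicalEpsilon Classical.
Set Implicit Arguments.
Unset Strict Implicit.
Unset Printing Implicit Defensive.
Import GRing.Theory Num.Theory.
Local Open Scope ring_scope.

(* A linear change of variables g in GL(V) extends to a Lie automorphism of f,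
   so verbal ideals are GL(V)-invariant; this is (1).

   For (3), let phi be a Lie endomorphism of f and L the matrix of its
   degree-one part.  On an element of degree d, phi agrees with the linear
   substitution by L up to terms of degree > d, and phi maps f_{>= nu+1}
   into itself.  A GL(V)-invariant subspace U of f_nu is stable under the
   substitution by any matrix L, invertible or not: t |-> (L + t).u is
   polynomial of degree <= nu and L + t is invertible for all but finitely
   many t, so Lagrange interpolation at nu + 1 such t recovers L.u.  Hence
   U + f_{>= nu+1} is verbal; conversely h is U + f_{>= nu+1} for
   U = h /\ f_nu.

   For (2), a GL(V)-invariant subspace S of a multiplicity-free sum of
   irreducibles W_i contains each component of each of its elements:
   otherwise two components W_i, W_j would be related by an invariant graph,
   which Schur's lemma turns into an isomorphism W_i ~ W_j.  So a verbal
   ideal containing f_{>= nu+1} is determined by the set of W_i it contains. *)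

(* The substitution x_i |-> sum_j M j i x_j of [gl_act], computed letter by
   letter.  It is defined over any commutative ring so that it can be
   evaluated at the polynomial matrix L + 'X in [gl_invariant_mx_act]. *)
Section MatrixAction.
Variables (R : comNzRingType) (m : nat).

Fixpoint mx_act (M : 'M[R]_m) (a : word m -> R) (w : word m) : R :=
  match w with
  | [::] => a [::]
  | x :: w' => \sum_(j < m) M x j * mx_act M (fun v => a (j :: v)) w'
  end.

Lemma mx_act_eq0 M w a :
  (forall v : word m, size v = size w -> a v = 0) -> mx_act M a w = 0.
Proof.
elim: w a => [|x w IH] a a0 /=; first exact: a0.
by rewrite big1 // => j _; rewrite IH ?mulr0 // => v vw; apply: a0; rewrite /= vw.
Qed.

Lemma eq_mx_act M w a b : (forall v, a v = b v) -> mx_act M a w = mx_act M b w.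
Proof.
elim: w a b => [|x w IH] a b ab /=; first exact: ab.
by apply: eq_bigr => j _; rewrite (IH _ (fun v => b (j :: v))).
Qed.

End MatrixAction.

Lemma rmorph_mx_act (R S : comNzRingType) m (f : {rmorphism R -> S})
    (M : 'M[R]_m) a w :
  f (mx_act M a w) = mx_act (map_mx f M) (fun v => f (a v)) w.
Proof.
elim: w a => [|x w IH] a //=.
by rewrite rmorph_sum; apply: eq_bigr => j _; rewrite rmorphM IH mxE.
Qed.

Lemma size_mx_act_poly (R : comNzRingType) m (M : 'M[{poly R}]_m)
    (a : word m -> {poly R}) w :
  (forall i j, size (M i j) <= 2)%N -> (forall v, size (a v) <= 1)%N ->
  (size (mx_act M a w) <= (size w).+1)%N.
Proof.
move=> M_lin a_const; elim: w a a_const => [|x w IH] a a_const /=.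
  exact: a_const.
apply: (leq_trans (size_sum _ _ _)); apply/bigmax_leqP => j _.
apply: (leq_trans (size_polyMleq _ _)); rewrite -subn1.
have := leq_add (M_lin x j) (IH (fun v => a (j :: v)) (fun v => a_const _)).
by move/(leq_sub2r 1); rewrite add2n subn1.
Qed.

Section SeriesAlgebra.
Variable m : nat.
Implicit Types a b : series m.

Lemma saddA : associative (@sadd m).
Proof. by move=> a b c; apply: functional_extensionality => w; apply: addrA. Qed.

Lemma saddC : commutative (@sadd m).
Proof. by move=> a b; apply: functional_extensionality => w; apply: addrC. Qed.

Lemma add0s : left_id (@szero m) (@sadd m).
Proof. by move=> a; apply: functional_extensionality => w; apply: add0r. Qed.

End SeriesAlgebra.

HB.instance Definition _ m := Monoid.isComLaw.Build (series m) (@szero m) (@sadd m)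
  (@saddA m) (@saddC m) (@add0s m).

Section SeriesIdentities.
Variable m : nat.
Implicit Types a b : series m.

Lemma big_saddE (I : Type) (r : seq I) (P : pred I) (F : I -> series m) w :
  (\big[@sadd m/@szero m]_(i <- r | P i) F i) w = \sum_(i <- r | P i) F i w.
Proof. exact: (big_morph (fun s : series m => s w)). Qed.

Lemma ssubE a b : ssub a b = sadd a (sscale (-1) b).
Proof. by apply: functional_extensionality => w; rewrite /sadd /sscale mulN1r. Qed.

Lemma ssubK a b : sadd (ssub a b) b = a.
Proof. by apply: functional_extensionality => w; apply: subrK. Qed.

Lemma ssubKr a b : ssub a (ssub a b) = b.
Proof. by apply: functional_extensionality => w; apply: subKr. Qed.

Lemma ssubxx a : ssub a a = @szero m.
Proof. by apply: functional_extensionality => w; apply: subrr. Qed.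

Lemma ssub_eq0 a b : ssub a b = @szero m -> a = b.
Proof.
move=> ab0; apply: functional_extensionality => w; apply/eqP.
by rewrite -subr_eq0; apply/eqP; apply: (congr1 (fun s => s w) ab0).
Qed.

Lemma sscale0 c : sscale c (@szero m) = @szero m.
Proof. by apply: functional_extensionality => w; apply: mulr0. Qed.

Lemma sscale_sum c (I : Type) (r : seq I) (F : I -> series m) :
  sscale c (\big[@sadd m/@szero m]_(i <- r) F i) =
  \big[@sadd m/@szero m]_(i <- r) sscale c (F i).
Proof.
apply: functional_extensionality => w.
by rewrite /sscale !big_saddE mulr_sumr.
Qed.

Lemma sbr0l b : sbr (@szero m) b = @szero m.
Proof.
apply: functional_extensionality => w.
by rewrite /sbr /ssub /smul !big1 ?subr0 // => j _; rewrite ?mul0r ?mulr0.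
Qed.

Lemma sbr0r a : sbr a (@szero m) = @szero m.
Proof.
apply: functional_extensionality => w.
by rewrite /sbr /ssub /smul !big1 ?subr0 // => j _; rewrite ?mul0r ?mulr0.
Qed.

End SeriesIdentities.

Lemma sum_tuple_cons (T : finType) (S : nmodType) n (F : n.+1.-tuple T -> S) :
  \sum_(u : n.+1.-tuple T) F u = \sum_(j : T) \sum_(u : n.-tuple T) F [tuple of j :: u].
Proof.
rewrite pair_big /= (reindex (fun p : T * n.-tuple T => [tuple of p.1 :: p.2])) //=.
exists (fun u : n.+1.-tuple T => (thead u, [tuple of behead u])).
  by move=> [x t] _ /=; rewrite theadE; congr pair; apply: val_inj.
by move=> u _ /=; rewrite [RHS]tuple_eta.
Qed.

Section SeriesMatrixAction.
Variable m : nat.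
Implicit Types (M : 'M[C]_m) (a b : series m).

Lemma gl_actE M a : gl_act M a = mx_act M a.
Proof.
apply: functional_extensionality => w; elim: w a => [|x w IH] a.
  rewrite /gl_act /= (eq_bigr (fun _ => a [::])); last first.
    by move=> u _; rewrite big_ord0 mulr1 (tuple0 u).
  by rewrite sumr_const card_tuple expn0.
rewrite /gl_act /= sum_tuple_cons; apply: eq_bigr => j _.
rewrite -IH /gl_act mulr_sumr; apply: eq_bigr => u _.
rewrite big_ord_recl /= mulrCA; congr (_ * (_ * _)).
apply: eq_bigr => i _; congr (M _ _).
  by rewrite !(tnth_nth x).
by rewrite !(tnth_nth j).
Qed.

Lemma mx_act0 M : mx_act M (@szero m) = @szero m.
Proof. by apply: functional_extensionality => w; apply: mx_act_eq0. Qed.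

Lemma mx_actD M a b : mx_act M (sadd a b) = sadd (mx_act M a) (mx_act M b).
Proof.
apply: functional_extensionality => w; rewrite /sadd.
elim: w a b => [|x w IH] a b //=.
rewrite -big_split /=; apply: eq_bigr => j _.
by rewrite -mulrDr -IH; congr (_ * _); apply: eq_mx_act.
Qed.

Lemma mx_actZ M c a : mx_act M (sscale c a) = sscale c (mx_act M a).
Proof.
apply: functional_extensionality => w; rewrite /sscale.
elim: w c a => [|x w IH] c a //=.
rewrite mulr_sumr; apply: eq_bigr => j _.
by rewrite (IH c (fun v => a (j :: v))) mulrCA.
Qed.

Lemma mx_act_sum M (I : Type) (r : seq I) (P : pred I) (F : I -> series m) :
  mx_act M (\big[@sadd m/@szero m]_(i <- r | P i) F i) =
  \big[@sadd m/@szero m]_(i <- r | P i) mx_act M (F i).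
Proof. by apply: big_morph; [apply: mx_actD | apply: mx_act0]. Qed.

Lemma smul_cons a b j (v : word m) :
  smul a b (j :: v) =
  a [::] * b (j :: v) + \sum_(i < (size v).+1) a (j :: take i v) * b (drop i v).
Proof. by rewrite /smul /= big_ord_recl. Qed.

Lemma mx_actM M a b : mx_act M (smul a b) = smul (mx_act M a) (mx_act M b).
Proof.
apply: functional_extensionality => w; elim: w a b => [|x w IH] a b.
  by rewrite /smul /= big_ord_recl big_ord0 addr0.
rewrite [RHS]smul_cons /=.
under eq_bigr => j _.
  rewrite (eq_mx_act _ _ (b := sadd (smul (fun v => a (j :: v)) b)
                                    (sscale (a [::]) (fun v => b (j :: v))))); last first.
    by move=> v; rewrite /sadd /sscale smul_cons addrC.
  rewrite mx_actD mx_actZ /sadd /sscale mulrDr.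
over.
rewrite big_split /= addrC; congr (_ + _).
  by rewrite mulr_sumr; apply: eq_bigr => j _; rewrite mulrCA.
under eq_bigr do rewrite IH /smul mulr_sumr.
rewrite exchange_big /=; apply: eq_bigr => i _.
by rewrite mulr_suml; apply: eq_bigr => j _; rewrite mulrA.
Qed.

Lemma mx_act_sbr M a b : mx_act M (sbr a b) = sbr (mx_act M a) (mx_act M b).
Proof. by rewrite /sbr !ssubE mx_actD mx_actZ !mx_actM. Qed.

Lemma mx_act_sgen M i :
  mx_act M (sgen i) = \big[@sadd m/@szero m]_(j < m) sscale (M j i) (sgen j).
Proof.
apply: functional_extensionality => -[|x w]; rewrite big_saddE /sscale /=.
  by rewrite /sgen big1 // => j _; rewrite mulr0.
have tail_gen j : mx_act M (fun v => sgen i (j :: v)) w =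
    if (j == i) && (w == [::]) then 1 else 0.
  case: w => [|y w] /=; first by rewrite /sgen eqseq_cons andbT.
  rewrite andbF big1 // => l _; rewrite mx_act_eq0 ?mulr0 // => v _.
  by rewrite /sgen eqseq_cons andbF.
under eq_bigr do rewrite tail_gen.
rewrite (bigD1 i) //= eqxx big1 ?addr0; last by move=> j /negPf ->; rewrite mulr0.
rewrite (bigD1 x) //= /sgen eqseq_cons eqxx /= big1 ?addr0 //.
by move=> j /negPf jx; rewrite eqseq_cons eq_sym jx mulr0.
Qed.

Lemma gl_act0 M : gl_act M (@szero m) = @szero m.
Proof. by rewrite gl_actE mx_act0. Qed.

Lemma gl_act_sum M (I : Type) (r : seq I) (F : I -> series m) :
  gl_act M (\big[@sadd m/@szero m]_(i <- r) F i) =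
  \big[@sadd m/@szero m]_(i <- r) gl_act M (F i).
Proof. by rewrite gl_actE mx_act_sum; under eq_bigr do rewrite -gl_actE. Qed.

End SeriesMatrixAction.

Section FreeLieAlgebra.
Variable m : nat.
Implicit Types (M : 'M[C]_m) (a b : series m).

Lemma free_lie_sub a b : free_lie a -> free_lie b -> free_lie (ssub a b).
Proof. by move=> fa fb; rewrite ssubE; apply: fl_add => //; apply: fl_scale. Qed.

Lemma free_lie_sum (I : Type) (r : seq I) (P : pred I) (F : I -> series m) :
  (forall i, P i -> free_lie (F i)) -> free_lie (\big[@sadd m/@szero m]_(i <- r | P i) F i).
Proof. by move=> fF; apply: big_ind => //; [apply: fl_zero | apply: fl_add]. Qed.

Lemma free_lie_nil a : free_lie a -> a [::] = 0.
Proof.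
elim=> [i||a' b' _ a0 _ b0|c a' _ a0|a' b' _ a0 _ b0] //=.
- by rewrite /sadd a0 b0 addr0.
- by rewrite /sscale a0 mulr0.
- by rewrite /sbr /ssub /smul /= !big_ord_recl !big_ord0 /= a0 b0 !mulr0 !addr0 subrr.
Qed.

Lemma free_lie_mx_act M a : free_lie a -> free_lie (mx_act M a).
Proof.
elim=> [i||a' b' _ fa _ fb|c a' _ fa|a' b' _ fa _ fb].
- by rewrite mx_act_sgen; apply: free_lie_sum => j _; apply/fl_scale/fl_gen.
- by rewrite mx_act0; apply: fl_zero.
- by rewrite mx_actD; apply: fl_add.
- by rewrite mx_actZ; apply: fl_scale.
- by rewrite mx_act_sbr; apply: fl_br.
Qed.

Lemma free_lie_gl_act M a : free_lie a -> free_lie (gl_act M a).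
Proof. by rewrite gl_actE; apply: free_lie_mx_act. Qed.

Lemma lie_endo_gl_act M : lie_endo (gl_act M).
Proof.
split=> [a|a b _ _|c a _|a b _ _]; rewrite ?gl_actE.
- exact: free_lie_mx_act.
- exact: mx_actD.
- exact: mx_actZ.
- exact: mx_act_sbr.
Qed.

End FreeLieAlgebra.

Lemma sum_ord_delta (R : nmodType) n (k : nat) (c : R) :
  \sum_(i < n) (if k == i then c else 0) = if (k < n)%N then c else 0.
Proof.
case: ltnP => kn.
  rewrite (bigD1 (Ordinal kn)) //= eqxx big1 ?addr0 // => i.
  by rewrite -val_eqE eq_sym => /negPf ->.
by rewrite big1 // => i _; case: eqP => // ki; move: (ltn_ord i); rewrite -ki ltnNge kn.
Qed.

Section HomogeneousComponents.
Variable m : nat.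
Implicit Types (M : 'M[C]_m) (a b : series m).

Definition hcomp n a : series m := fun w => if size w == n then a w else 0.
Definition homog n a := forall w : word m, size w != n -> a w = 0.
Definition vanish_below d a := forall w : word m, (size w < d)%N -> a w = 0.
Definition vanish_above d a := forall w : word m, (d < size w)%N -> a w = 0.

Lemma homog_hcomp n a : homog n (hcomp n a).
Proof. by move=> w /negPf wn; rewrite /hcomp wn. Qed.

Lemma hcomp_id n a : homog n a -> hcomp n a = a.
Proof.
by move=> an; apply: functional_extensionality => w; rewrite /hcomp; case: eqP => // /eqP/an.
Qed.

Lemma homog_mx_act M n a : homog n a -> homog n (mx_act M a).
Proof. by move=> an w wn; apply: mx_act_eq0 => v vw; apply: an; rewrite vw. Qed.

Lemma vanish_above_mx_act M d a : vanish_above d a -> vanish_above d (mx_act M a).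
Proof. by move=> ad w dw; apply: mx_act_eq0 => v vw; apply: ad; rewrite vw. Qed.

Lemma hcompD n a b : hcomp n (sadd a b) = sadd (hcomp n a) (hcomp n b).
Proof.
by apply: functional_extensionality => w; rewrite /hcomp /sadd; case: ifP; rewrite ?addr0.
Qed.

Lemma hcompZ n c a : hcomp n (sscale c a) = sscale c (hcomp n a).
Proof.
by apply: functional_extensionality => w; rewrite /hcomp /sscale; case: ifP; rewrite ?mulr0.
Qed.

Lemma hcomp0 n : hcomp n (@szero m) = @szero m.
Proof. by apply: functional_extensionality => w; rewrite /hcomp; case: ifP. Qed.

Lemma hcompB n a b : hcomp n (ssub a b) = ssub (hcomp n a) (hcomp n b).
Proof. by rewrite !ssubE hcompD hcompZ. Qed.

Lemma hcomp_sgen n i : hcomp n (sgen i) = if n == 1%N then sgen i else @szero m.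
Proof.
apply: functional_extensionality => w; rewrite /hcomp /sgen /szero.
case: (n =P 1%N) => [->|n1]; case: (w =P [:: i]) => [->|_] /=; rewrite ?if_same //.
by case: eqP => // /esym /n1.
Qed.

Lemma hcompM n a b :
  hcomp n (smul a b) = \big[@sadd m/@szero m]_(i < n.+1) smul (hcomp i a) (hcomp (n - i)%N b).
Proof.
apply: functional_extensionality => w; rewrite big_saddE /hcomp /smul exchange_big /=.
have size_take_ord (j : 'I_(size w).+1) : size (take j w) = j.
  by rewrite size_take_min; apply/minn_idPl; rewrite -ltnS.
under [RHS]eq_bigr => j _.
  under eq_bigr => i _ do rewrite size_take_ord size_drop.
  rewrite (eq_bigr (fun i : 'I_n.+1 => if (j : nat) == i then a (take j w) *
      (if (size w - j)%N == (n - j)%N then b (drop j w) else 0) else 0)); last first.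
    by move=> i _; case: eqP => [->|]; rewrite ?mul0r.
  rewrite sum_ord_delta.
over.
case: eqP => [wn|wn].
  apply: eq_bigr => j _; have jn : (j < n.+1)%N by rewrite -wn ltn_ord.
  by rewrite jn -wn eqxx.
rewrite big1 // => j _; case: ifP => // jn; case: eqP; rewrite ?mulr0 //.
by move: (ltn_ord j) jn => j1 j2 j3; exfalso; apply: wn; lia.
Qed.

Lemma hcomp_sbr n a b :
  hcomp n (sbr a b) = \big[@sadd m/@szero m]_(i < n.+1) sbr (hcomp i a) (hcomp (n - i)%N b).
Proof.
rewrite /sbr hcompB !hcompM; apply: functional_extensionality => w.
rewrite /ssub !big_saddE sumrB; congr (_ - _).
rewrite (reindex_inj rev_ord_inj) /=; apply: eq_bigr => i _.
by rewrite subKn // -ltnS.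
Qed.

Lemma free_lie_hcomp n a : free_lie a -> free_lie (hcomp n a).
Proof.
move=> fa; elim: fa n => [i||a' b' _ fa _ fb|c a' _ fa|a' b' _ fa _ fb] n.
- by rewrite hcomp_sgen; case: eqP => _; [apply: fl_gen | apply: fl_zero].
- by rewrite hcomp0; apply: fl_zero.
- by rewrite hcompD; apply: fl_add.
- by rewrite hcompZ; apply: fl_scale.
- by rewrite hcomp_sbr; apply: free_lie_sum => i _; apply: fl_br.
Qed.

Lemma hcomp0_free a : free_lie a -> hcomp 0 a = @szero m.
Proof.
move=> fa; apply: functional_extensionality => w; rewrite /hcomp.
by case: eqP => // /size0nil ->; apply: free_lie_nil.
Qed.

Lemma smul_vanish_above d d' a b : vanish_above d a -> vanish_above d' b ->
  vanish_above (d + d') (smul a b).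
Proof.
move=> ad bd' w w_big; rewrite /smul big1 // => j _.
case: (ltnP d (size (take j w))) => jd; first by rewrite ad ?mul0r.
by rewrite bd' ?mulr0 // size_drop; move: jd; rewrite size_take_min; lia.
Qed.

Lemma free_lie_vanish_above a : free_lie a -> exists d, vanish_above d a.
Proof.
elim=> [i||a' b' _ [d ad] _ [d' bd']|c a' _ [d ad]|a' b' _ [d ad] _ [d' bd']].
- by exists 1%N => w w1; rewrite /sgen; case: eqP => // wi; rewrite wi in w1.
- by exists 0%N.
- exists (maxn d d') => w w_big; rewrite /sadd ad ?bd' ?addr0 //.
    by apply: leq_ltn_trans w_big; rewrite leq_maxr.
  by apply: leq_ltn_trans w_big; rewrite leq_maxl.
- by exists d => w w_big; rewrite /sscale ad ?mulr0.
- exists (d + d')%N => w w_big; rewrite /sbr /ssub (smul_vanish_above ad bd') //.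
  by rewrite (smul_vanish_above bd' ad) ?subr0 // addnC.
Qed.

Lemma sum_hcompE d a w :
  (\big[@sadd m/@szero m]_(n < d.+1) hcomp n a) w = if (size w <= d)%N then a w else 0.
Proof. by rewrite big_saddE /hcomp sum_ord_delta. Qed.

Lemma sum_hcomp d a : vanish_above d a -> a = \big[@sadd m/@szero m]_(n < d.+1) hcomp n a.
Proof.
move=> ad; apply: functional_extensionality => w; rewrite sum_hcompE.
by case: leqP => // /ad.
Qed.

End HomogeneousComponents.

Section Agreement.
Variable m : nat.
Implicit Types a b : series m.

Definition agree_upto d a b := forall w : word m, (size w <= d)%N -> a w = b w.

Lemma homog_vanish_below n a : homog n a -> vanish_below n a.
Proof. by move=> an w wn; apply: an; rewrite neq_ltn wn. Qed.

Lemma smul_agree i k a a' b b' :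
  agree_upto i a a' -> agree_upto k b b' -> vanish_below i a' -> vanish_below k b' ->
  agree_upto (i + k) (smul a b) (smul a' b').
Proof.
move=> aa' bb' a'0 b'0 w w_le; rewrite /smul; apply: eq_bigr => j _.
have size_split : (size (take j w) + size (drop j w) = size w)%N.
  by rewrite -size_cat cat_take_drop.
case: (ltngtP (size (take j w)) i) => ji.
- by rewrite aa' ?a'0 ?mul0r // ltnW.
- by rewrite bb' ?b'0 ?mulr0 //; lia.
- by rewrite aa' ?bb' ?ji //; lia.
Qed.

Lemma sbr_agree i k a a' b b' :
  agree_upto i a a' -> agree_upto k b b' -> vanish_below i a' -> vanish_below k b' ->
  agree_upto (i + k) (sbr a b) (sbr a' b').
Proof.
move=> aa' bb' a'0 b'0 w w_le; rewrite /sbr /ssub (smul_agree aa' bb') //.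
by rewrite (smul_agree bb' aa') // addnC.
Qed.

End Agreement.

Section LieEndomorphism.
Variables (m : nat) (phi : series m -> series m).
Hypothesis phi_endo : lie_endo phi.
Implicit Types a b : series m.

Lemma lie_endo_free a : free_lie a -> free_lie (phi a).
Proof. by case: phi_endo => fphi _ _ _; apply: fphi. Qed.

Lemma lie_endoD a b : free_lie a -> free_lie b -> phi (sadd a b) = sadd (phi a) (phi b).
Proof. by case: phi_endo => _ phiD _ _; apply: phiD. Qed.

Lemma lie_endoZ c a : free_lie a -> phi (sscale c a) = sscale c (phi a).
Proof. by case: phi_endo => _ _ phiZ _; apply: phiZ. Qed.

Lemma lie_endo_sbr a b : free_lie a -> free_lie b -> phi (sbr a b) = sbr (phi a) (phi b).
Proof. by case: phi_endo => _ _ _ phi_br; apply: phi_br. Qed.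

Lemma lie_endo0 : phi (@szero m) = @szero m.
Proof.
have zero_scale a : sscale 0 a = @szero m.
  by apply: functional_extensionality => w; apply: mul0r.
by rewrite -(zero_scale (@szero m)) lie_endoZ ?zero_scale //; apply: fl_zero.
Qed.

Lemma lie_endo_sum (I : Type) (r : seq I) (F : I -> series m) :
  (forall i, free_lie (F i)) ->
  phi (\big[@sadd m/@szero m]_(i <- r) F i) = \big[@sadd m/@szero m]_(i <- r) phi (F i).
Proof.
move=> fF; elim: r => [|x r IH]; first by rewrite !big_nil lie_endo0.
by rewrite !big_cons lie_endoD ?IH //; apply: free_lie_sum.
Qed.

Definition linear_part : 'M[C]_m := \matrix_(j, i) phi (sgen i) [:: j].

(* Both sides are Lie morphisms that agree on the generators; on a bracket of
   components of degrees i and d - i, the degree <= d part only involves the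
   factors up to degrees i and d - i. *)
Lemma lie_endo_agree_linear_part d u : free_lie u -> homog d u ->
  agree_upto d (phi u) (mx_act linear_part u).
Proof.
elim/ltn_ind: d u => d IHd u fu /hcomp_id <-.
have agree0 : agree_upto d (phi (@szero m)) (mx_act linear_part (@szero m)).
  by move=> w _; rewrite lie_endo0 mx_act0.
elim: fu => [i||a b fa IHa fb IHb|c a fa IHa|a b fa _ fb _].
- rewrite hcomp_sgen; case: eqP => [->|_]; last exact: agree0.
  move=> [|x [|y w]] // _.
    by rewrite /= /sgen /=; apply/free_lie_nil/lie_endo_free/fl_gen.
  rewrite mx_act_sgen big_saddE (bigD1 x) //= /sscale /sgen eqxx mulr1 mxE big1 ?addr0 //.
  by move=> j /negPf jx; rewrite eqseq_cons eq_sym jx mulr0.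
- by rewrite hcomp0.
- rewrite hcompD mx_actD lie_endoD; try exact: free_lie_hcomp.
  by move=> w w_le; rewrite /sadd IHa ?IHb.
- rewrite hcompZ mx_actZ lie_endoZ; last exact: free_lie_hcomp.
  by move=> w w_le; rewrite /sscale IHa.
- rewrite hcomp_sbr mx_act_sum lie_endo_sum => [w w_le|i]; last first.
    by apply: fl_br; apply: free_lie_hcomp.
  rewrite !big_saddE; apply: eq_bigr => i _.
  rewrite mx_act_sbr lie_endo_sbr; try exact: free_lie_hcomp.
  have [->|i_gt0] := posnP i.
    by rewrite hcomp0_free // lie_endo0 mx_act0 !sbr0l.
  have [->|di_gt0] := posnP (d - i)%N.
    by rewrite (hcomp0_free fb) lie_endo0 mx_act0 !sbr0r.
  have i_le : (i <= d)%N by rewrite -ltnS.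
  have agree_a := IHd i _ (hcomp i a) (free_lie_hcomp i fa) (@homog_hcomp m i a).
  have agree_b :=
    IHd (d - i)%N _ (hcomp (d - i)%N b) (free_lie_hcomp _ fb) (@homog_hcomp m (d - i)%N b).
  apply: (sbr_agree (agree_a _) (agree_b _)); try lia;
    exact/homog_vanish_below/homog_mx_act/homog_hcomp.
Qed.

Lemma lie_endo_vanish_below d b : free_lie b -> vanish_below d b -> vanish_below d (phi b).
Proof.
move=> fb bd; have [N bN] := free_lie_vanish_above fb.
rewrite (sum_hcomp bN) lie_endo_sum => [w wd|n]; last exact: free_lie_hcomp.
rewrite big_saddE big1 // => n _; case: (ltnP n d) => nd.
  have -> : hcomp n b = @szero m.
    apply: functional_extensionality => v; rewrite /hcomp.
    by case: eqP => // vn; apply: bd; rewrite vn.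
  by rewrite lie_endo0.
rewrite (lie_endo_agree_linear_part (free_lie_hcomp n fb) (homog_hcomp b)).
  by rewrite (homog_mx_act _ (homog_hcomp b)) // neq_ltn (leq_trans wd nd).
exact: ltnW (leq_trans wd nd).
Qed.

End LieEndomorphism.

Section Subspaces.
Variable m : nat.
Implicit Types (a b : series m) (U V W : series m -> Prop).

Lemma subspace0 U : is_subspace U -> U (@szero m).
Proof. by case. Qed.

Lemma subspaceD U a b : is_subspace U -> U a -> U b -> U (sadd a b).
Proof. by case=> _ UD _; apply: UD. Qed.

Lemma subspaceZ U c a : is_subspace U -> U a -> U (sscale c a).
Proof. by case=> _ _ UZ; apply: UZ. Qed.

Lemma subspaceB U a b : is_subspace U -> U a -> U b -> U (ssub a b).
Proof. by move=> Usub Ua Ub; rewrite ssubE; apply: subspaceD => //; apply: subspaceZ. Qed.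

Lemma subspace_sum U (I : Type) (r : seq I) (P : pred I) (F : I -> series m) :
  is_subspace U -> (forall i, P i -> U (F i)) -> U (\big[@sadd m/@szero m]_(i <- r | P i) F i).
Proof. by case=> U0 UD _ UF; apply: big_ind. Qed.

Lemma subspaceI U V : is_subspace U -> is_subspace V -> is_subspace (fun a => U a /\ V a).
Proof.
move=> Usub Vsub; split; first by split; apply: subspace0.
  by move=> a b [Ua Va] [Ub Vb]; split; apply: subspaceD.
by move=> c a [Ua Va]; split; apply: subspaceZ.
Qed.

Lemma gl_invariantI U V : gl_invariant U -> gl_invariant V -> gl_invariant (fun a => U a /\ V a).
Proof. by move=> Uinv Vinv g gu a [Ua Va]; split; [apply: Uinv | apply: Vinv]. Qed.

Lemma gl_irreducible_full W U : gl_irreducible W -> is_subspace U -> gl_invariant U ->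
  psubset U W -> (exists2 a, U a & a <> @szero m) -> psubset W U.
Proof. by case=> _ _ _ Wirr Usub Uinv UW [a Ua a0]; case: (Wirr U) => // /(_ a Ua). Qed.

Lemma gl_irreducible_meet W U a : gl_irreducible W ->
  is_subspace U -> gl_invariant U -> W a -> U a -> a <> @szero m -> psubset W U.
Proof.
move=> Wirr Usub Uinv Wa Ua a0 b Wb; case: (Wirr) => Wsub Winv _ _.
have UW_full := gl_irreducible_full Wirr (subspaceI Usub Wsub) (gl_invariantI Uinv Winv).
by case: (UW_full (fun c (cUW : U c /\ W c) => cUW.2) (ex_intro2 _ _ a (conj Ua Wa) a0) b Wb).
Qed.

End Subspaces.

(* At most size p - 1 of the naturals below size p + n are roots of p; the
   indices beyond the non-roots are sent to larger naturals to keep x injective. *)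
Lemma nonroots_injective (F : numDomainType) (p : {poly F}) n : p != 0 ->
  exists x : nat -> F, injective x /\ forall j, (j < n)%N -> ~~ root p (x j).
Proof.
move=> p_neq0; pose N := (size p + n)%N.
pose isroot (i : nat) := root p i%:R.
pose good := filter (predC isroot) (iota 0 N).
have good_lt i : (i < size good)%N -> (nth 0%N good i < N)%N.
  by move=> iS; have := mem_nth 0%N iS; rewrite mem_filter mem_iota => /andP [_ /andP [_]].
have size_good : (n <= size good)%N.
  have : (size [seq (i%:R : F) | i <- filter isroot (iota 0 N)] < size p)%N.
    apply: max_poly_roots p_neq0 _ _.
      by apply/allP => t /=; case/mapP => i; rewrite mem_filter => /andP [iroot _] ->.
    by rewrite map_inj_uniq ?filter_uniq ?iota_uniq // => i j /eqP; rewrite eqr_nat => /eqP.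
  have := count_predC isroot (iota 0 N).
  by rewrite size_map !size_filter size_iota /N; lia.
pose y j := if (j < size good)%N then nth 0%N good j else (N + j)%N.
exists (fun j => (y j)%:R); split.
  move=> j1 j2 /eqP; rewrite eqr_nat => /eqP; rewrite /y.
  case: ifP => j1S; case: ifP => j2S y12.
  - by apply/eqP; rewrite -(nth_uniq 0%N j1S j2S) ?filter_uniq ?iota_uniq ?y12.
  - by have := good_lt _ j1S; lia.
  - by have := good_lt _ j2S; lia.
  - by lia.
move=> j jn; have jS := leq_trans jn size_good; rewrite /y jS.
by have := mem_nth 0%N jS; rewrite mem_filter => /andP [].
Qed.

Lemma unitmx_add_scalar (F : fieldType) m (L : 'M[F]_m) t :
  (L + t%:M \in unitmx) = ~~ root (char_poly (- L)) t.
Proof.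
have -> : L + t%:M = map_mx (horner_eval t) (char_poly_mx (- L)).
  apply/matrixP => i j; rewrite !mxE /horner_eval !hornerE /=.
  by rewrite hornerMn hornerX opprK addrC.
by rewrite unitmxE unitfE det_map_mx.
Qed.

Lemma gl_invariant_mx_act m d (U : series m -> Prop) :
  is_subspace U -> (forall u, U u -> vanish_above d u) -> gl_invariant U ->
  forall (L : 'M[C]_m) u, U u -> U (gl_act L u).
Proof.
move=> Usub U_bounded Uinv L u Uu.
have [x [x_inj x_root]] := nonroots_injective d.+1 (monic_neq0 (char_poly_monic (- L))).
pose Lt := map_mx polyC L + 'X%:M.
pose P w := mx_act Lt (fun v => (u v)%:P) w.
have P_eval t w : (P w).[t] = gl_act (L + t%:M) u w.
  rewrite gl_actE -horner_evalE rmorph_mx_act.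
  have -> : map_mx (horner_eval t) Lt = L + t%:M.
    by apply/matrixP => i j; rewrite !mxE /horner_eval !hornerE hornerMn hornerX.
  by apply: eq_mx_act => v; apply: hornerC.
have size_P w : (size (P w) <= d.+1)%N.
  case: (leqP (size w) d) => wd.
    apply: leq_trans (size_mx_act_poly _ _ _) _ => [i j|v|]; last by [].
      rewrite !mxE; apply: (leq_trans (size_polyD _ _)); rewrite geq_max.
      rewrite (leq_trans (size_polyC_leq1 _)) //.
      by case: (i == j); rewrite ?mulr1n ?mulr0n ?size_polyX ?size_poly0.
    exact: size_polyC_leq1.
  by rewrite /P mx_act_eq0 ?size_poly0 // => v vw; rewrite U_bounded ?vw.
have -> : gl_act L u = \big[@sadd m/@szero m]_(i < d.+1)
    sscale (tnth (d.+1.-lagrange x) i).[0] (gl_act (L + (x i)%:M) u).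
  apply: functional_extensionality => w; rewrite big_saddE.
  have -> : gl_act L u w = (P w).[0].
    by rewrite P_eval; congr (gl_act _ u w); apply/matrixP => i j; rewrite !mxE mul0rn addr0.
  rewrite [in LHS](lagrange_gen (ltn0Sn d) x_inj (size_P w)) horner_sum.
  by apply: eq_bigr => i _; rewrite hornerM hornerC /sscale P_eval mulrC.
apply: subspace_sum => // i _; apply: subspaceZ => //; apply: Uinv => //.
by rewrite unitmx_add_scalar x_root.
Qed.

Section GraphIsomorphism.
Variables (m : nat) (W1 W2 : series m -> Prop) (G : series m -> series m -> Prop).
Hypotheses (W1_irr : gl_irreducible W1) (W2_irr : gl_irreducible W2).
Hypothesis G0 : G (@szero m) (@szero m).
Hypothesis GD : forall x y x' y', G x y -> G x' y' -> G (sadd x x') (sadd y y').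
Hypothesis GZ : forall c x y, G x y -> G (sscale c x) (sscale c y).
Hypothesis G_gl : forall g x y, g \in unitmx -> G x y -> G (gl_act g x) (gl_act g y).
Hypothesis G_sub : forall x y, G x y -> W1 x /\ W2 y.
Hypothesis G_functional : forall y, G (@szero m) y -> y = @szero m.
Hypothesis G_nontrivial : exists x y, G x y /\ y <> @szero m.

Let GB x y x' y' : G x y -> G x' y' -> G (ssub x x') (ssub y y').
Proof. by move=> Gxy Gxy'; rewrite !ssubE; apply: GD => //; apply: GZ. Qed.

Let G_unique x y y' : G x y -> G x y' -> y = y'.
Proof.
by move=> Gxy Gxy'; apply/ssub_eq0/G_functional; rewrite -(ssubxx x); apply: GB.
Qed.

Let domain_full : psubset W1 (fun x => exists y, G x y).
Proof.
have [x [y [Gxy y0]]] := G_nontrivial.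
apply: gl_irreducible_full => //.
- split; first by exists (@szero m).
    by move=> a b [y1 Gay1] [y2 Gby2]; exists (sadd y1 y2); apply: GD.
  by move=> c a [y1 Gay1]; exists (sscale c y1); apply: GZ.
- by move=> g gu a [y1 Gay1]; exists (gl_act g y1); apply: G_gl.
- by move=> a [y1 /G_sub []].
- by exists x; [exists y | move=> x0; apply/y0/G_functional; rewrite -x0].
Qed.

Let image_full : psubset W2 (fun y => exists x, G x y).
Proof.
have [x [y [Gxy y0]]] := G_nontrivial.
apply: gl_irreducible_full => //.
- split; first by exists (@szero m).
    by move=> a b [x1 Gx1a] [x2 Gx2b]; exists (sadd x1 x2); apply: GD.
  by move=> c a [x1 Gx1a]; exists (sscale c x1); apply: GZ.
- by move=> g gu a [x1 Gx1a]; exists (gl_act g x1); apply: G_gl.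
- by move=> a [x1 /G_sub []].
- by exists y => //; exists x.
Qed.

Let kernel_trivial x : G x (@szero m) -> x = @szero m.
Proof.
move=> Gx0; apply: NNPP => x0; have [x' [y' [Gxy' y'0]]] := G_nontrivial.
suff /(_ x') Kx' : psubset W1 (fun a => G a (@szero m)).
  by apply/y'0/esym/(G_unique (Kx' (G_sub Gxy').1)).
apply: gl_irreducible_full => //.
- split => // [a b Ga Gb|c a Ga]; first by rewrite -(add0s (@szero m)); apply: GD.
  by rewrite -(sscale0 _ c); apply: GZ.
- by move=> g gu a Ga; rewrite -(gl_act0 g); apply: G_gl.
- by move=> a /G_sub [].
- by exists x.
Qed.

Let psi x := epsilon (inhabits (@szero m)) (G x).

Let G_psi x : W1 x -> G x (psi x).
Proof. by move=> /domain_full; apply: epsilon_spec. Qed.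

Let psi_eq x y : G x y -> psi x = y.
Proof. by move=> Gxy; apply: (G_unique (G_psi (G_sub Gxy).1) Gxy). Qed.

Lemma graph_gl_isomorphic : gl_isomorphic W1 W2.
Proof.
exists psi; split.
- by move=> x /G_psi /G_sub [].
- by move=> x x' Wx Wx'; apply/psi_eq/GD; apply: G_psi.
- by move=> c x Wx; apply/psi_eq/GZ/G_psi.
- split=> [x x' Wx Wx' psi_xx'|y /image_full [x Gxy]].
    apply/ssub_eq0/kernel_trivial.
    by have := GB (G_psi Wx) (G_psi Wx'); rewrite psi_xx' ssubxx.
  by exists x; [apply: (G_sub Gxy).1 | apply: psi_eq].
- by move=> g gu x Wx; apply/psi_eq/G_gl/G_psi.
Qed.

End GraphIsomorphism.

Section MultiplicityFree.
Variables (m k : nat) (W : 'I_k -> series m -> Prop).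
Hypothesis W_irr : forall i, gl_irreducible (W i).
Hypothesis W_noniso : forall i j, i != j -> ~ gl_isomorphic (W i) (W j).
Variable S : series m -> Prop.
Hypotheses (S_sub : is_subspace S) (S_inv : gl_invariant S).

Let W_sub i : is_subspace (W i). Proof. by case: (W_irr i). Qed.
Let W_inv i : gl_invariant (W i). Proof. by case: (W_irr i). Qed.

Definition S_decomposition (J : {set 'I_k}) (ws : 'I_k -> series m) :=
  [/\ forall i, W i (ws i), forall i, i \notin J -> ws i = @szero m
    & S (\big[@sadd m/@szero m]_(i < k) ws i)].

Lemma S_decomposition0 J : S_decomposition J (fun=> @szero m).
Proof. by split=> // [i|]; [apply: subspace0 | rewrite big1 //; apply: subspace0]. Qed.

Lemma S_decompositionD J ws vs : S_decomposition J ws -> S_decomposition J vs ->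
  S_decomposition J (fun i => sadd (ws i) (vs i)).
Proof.
move=> [Wws ws_J Sws] [Wvs vs_J Svs]; split=> [i|i iJ|].
- exact: subspaceD.
- by rewrite ws_J // vs_J // add0s.
- by rewrite big_split; apply: subspaceD.
Qed.

Lemma S_decompositionZ J c ws : S_decomposition J ws ->
  S_decomposition J (fun i => sscale c (ws i)).
Proof.
move=> [Wws ws_J Sws]; split=> [i|i iJ|].
- exact: subspaceZ.
- by rewrite ws_J // sscale0.
- by rewrite -sscale_sum; apply: subspaceZ.
Qed.

Lemma S_decomposition_gl J g ws : g \in unitmx -> S_decomposition J ws ->
  S_decomposition J (fun i => gl_act g (ws i)).
Proof.
move=> gu [Wws ws_J Sws]; split=> [i|i iJ|].
- exact: W_inv.
- by rewrite ws_J // gl_act0.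
- by rewrite -gl_act_sum; apply: S_inv.
Qed.

(* If [ws i] is not in S, some other [ws j] is not
   in S either, so S meets W j trivially; then the (i, j)-components of the
   S-decompositions supported in J form the graph of a GL-isomorphism
   W i ~ W j (functional by induction on J :\ i). *)
Lemma S_decomposition_components n (J : {set 'I_k}) ws :
  (#|J| <= n)%N -> S_decomposition J ws ->
  forall i, S (ws i).
Proof.
elim: n J ws => [|n IHn] J ws J_n dws i; case: (dws) => Wws ws_J S_sum.
  rewrite ws_J; first exact: subspace0.
  by move: J_n; rewrite leqn0 cards_eq0 => /eqP ->; rewrite inE.
apply: NNPP => Swi.
have iJ : i \in J.
  by case: (boolP (i \in J)) => // /ws_J wi0; case: Swi; rewrite wi0; apply: subspace0.
have [j [ji Swj]] : exists j, j != i /\ ~ S (ws j).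
  apply: NNPP => S_others; apply: Swi.
  have -> : ws i = ssub (\big[@sadd m/@szero m]_(l < k) ws l)
                        (\big[@sadd m/@szero m]_(l < k | l != i) ws l).
    by apply: functional_extensionality => w; rewrite /ssub !big_saddE (bigD1 i) //= addrK.
  apply: subspaceB => //; apply: subspace_sum => // l li.
  by apply: NNPP => Swl; apply: S_others; exists l.
have SWj0 y : S y -> W j y -> y = @szero m.
  move=> Sy Wjy; apply: NNPP => y0; apply: Swj.
  exact: gl_irreducible_meet (W_irr j) S_sub S_inv Wjy Sy y0 _ (Wws j).
pose G x y := exists vs, [/\ S_decomposition J vs, vs i = x & vs j = y].
apply: (W_noniso (i := i) (j := j)); first by rewrite eq_sym.
apply: (@graph_gl_isomorphic m (W i) (W j) G); rewrite /G.
- exact: W_irr.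
- exact: W_irr.
- by exists (fun=> @szero m); split=> //; apply: S_decomposition0.
- move=> x y x' y' [vs [dvs <- <-]] [vs' [dvs' <- <-]].
  by exists (fun l => sadd (vs l) (vs' l)); split=> //; apply: S_decompositionD.
- move=> c x y [vs [dvs <- <-]].
  by exists (fun l => sscale c (vs l)); split=> //; apply: S_decompositionZ.
- move=> g x y gu [vs [dvs <- <-]].
  by exists (fun l => gl_act g (vs l)); split=> //; apply: S_decomposition_gl.
- by move=> x y [vs [[Wvs _ _] <- <-]].
- move=> y [vs [[Wvs vs_J Svs] vi0 <-]]; apply: SWj0 => //.
  apply: (IHn (J :\ i)); first by move: J_n; rewrite (cardsD1 i J) iJ.
  split=> // l; rewrite in_setD1 negb_and negbK => /orP [/eqP -> //|]; exact: vs_J.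
- exists (ws i), (ws j); split; first by exists ws.
  by move=> wj0; apply: Swj; rewrite wj0; apply: subspace0.
Qed.

Lemma gl_invariant_components ws : (forall i, W i (ws i)) ->
  S (\big[@sadd m/@szero m]_(i < k) ws i) -> forall i, S (ws i).
Proof.
move=> Wws S_sum; apply: (@S_decomposition_components k [set: 'I_k]).
  by rewrite cardsT card_ord.
by split=> // i; rewrite in_setT.
Qed.

End MultiplicityFree.

Section TruncatedFreeLie.
Variable m : nat.
Implicit Types (a b : series m) (h : series m -> Prop).

Lemma verbal_subspace h : verbal h -> is_subspace h.
Proof. by case=> [[]]. Qed.

Lemma verbal_gl_invariant h : verbal h -> gl_invariant h.
Proof. by case=> _ h_endo g _ a ha; apply: h_endo => //; apply: lie_endo_gl_act. Qed.

Lemma fge0 d : fge d (@szero m).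
Proof. by split; [apply: fl_zero | by []]. Qed.

Lemma fdeg_subspace n : is_subspace (@fdeg m n).
Proof.
split; first by split; [apply: fl_zero |].
  move=> a b [fa an] [fb bn]; split=> [|w wn]; first exact: fl_add.
  by rewrite /sadd an ?bn ?addr0.
move=> c a [fa an]; split=> [|w wn]; first exact: fl_scale.
by rewrite /sscale an ?mulr0.
Qed.

Lemma fdeg_gl_invariant n : gl_invariant (@fdeg m n).
Proof.
move=> g _ a [fa an]; split; first exact: free_lie_gl_act.
by rewrite gl_actE; apply: homog_mx_act.
Qed.

Lemma ftrunc_subspace d : is_subspace (@ftrunc m d).
Proof.
split; first by split; [apply: fl_zero |].
  move=> a b [fa ad] [fb bd]; split=> [|w wd]; first exact: fl_add.
  by rewrite /sadd ad ?bd ?addr0.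
move=> c a [fa ad]; split=> [|w wd]; first exact: fl_scale.
by rewrite /sscale ad ?mulr0.
Qed.

Lemma ftrunc_gl_invariant d : gl_invariant (@ftrunc m d).
Proof.
move=> g _ a [fa ad]; split; first exact: free_lie_gl_act.
by rewrite gl_actE; apply: vanish_above_mx_act.
Qed.

Lemma free_lie_trunc_split d a : free_lie a ->
  ftrunc d (\big[@sadd m/@szero m]_(n < d.+1) hcomp n a) /\
  fge d.+1 (ssub a (\big[@sadd m/@szero m]_(n < d.+1) hcomp n a)).
Proof.
move=> fa; have ft : free_lie (\big[@sadd m/@szero m]_(n < d.+1) hcomp n a).
  by apply: free_lie_sum => n _; apply: free_lie_hcomp.
split; split=> //.
- by move=> w dw; rewrite sum_hcompE leqNgt dw.
- exact: free_lie_sub.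
- by move=> w w_le; rewrite /ssub sum_hcompE -ltnS w_le subrr.
Qed.

End TruncatedFreeLie.

Section VerbalMultiplicityFree.
Variables (m nu k : nat) (W : 'I_k -> series m -> Prop).
Hypothesis W_irr : forall i, gl_irreducible (W i).
Hypothesis W_span : forall t, ftrunc nu t ->
  exists2 ws : 'I_k -> series m, (forall i, W i (ws i)) & t = \big[@sadd m/@szero m]_(i < k) ws i.
Hypothesis W_noniso : forall i j, i != j -> ~ gl_isomorphic (W i) (W j).

Definition span_components (J : {set 'I_k}) (a : series m) :=
  exists ws : 'I_k -> series m,
    [/\ forall i, W i (ws i), forall i, i \notin J -> ws i = @szero m
      & fge nu.+1 (ssub a (\big[@sadd m/@szero m]_(i < k) ws i))].

Lemma verbal_span_components h (J : {set 'I_k}) :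
  verbal h -> psubset (@fge m nu.+1) h -> (forall i, i \in J <-> psubset (W i) h) ->
  forall a, h a <-> span_components J a.
Proof.
move=> hv h_ge J_h a; have [[h_sub h_free _] _] := hv.
have h_inv := verbal_gl_invariant hv.
split=> [ha|[ws [Wws ws_J a_ws]]].
  have [t_trunc a_t] := free_lie_trunc_split nu (h_free a ha).
  have [ws Wws t_ws] := W_span t_trunc; exists ws; rewrite -t_ws.
  have h_t : h (\big[@sadd m/@szero m]_(n < nu.+1) hcomp n a).
    rewrite -(ssubKr a (\big[@sadd m/@szero m]_(n < nu.+1) hcomp n a)).
    by apply: subspaceB => //; apply: h_ge.
  have h_ws i : h (ws i).
    have := gl_invariant_components W_irr W_noniso (subspaceI h_sub (ftrunc_subspace m nu))
      (gl_invariantI h_inv (@ftrunc_gl_invariant m nu)) Wws.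
    by rewrite -t_ws => /(_ (conj h_t t_trunc) i) [].
  split=> // i iJ; apply: NNPP => wi0; move/negP: iJ; apply; apply/J_h.
  exact: gl_irreducible_meet (W_irr i) h_sub h_inv (Wws i) (h_ws i) wi0.
rewrite -(ssubK a (\big[@sadd m/@szero m]_(i < k) ws i)); apply: subspaceD => //.
  exact: h_ge.
apply: subspace_sum => // i _; case: (boolP (i \in J)) => [/J_h|/ws_J ->].
  by apply; apply: Wws.
exact: subspace0.
Qed.

End VerbalMultiplicityFree.

Lemma In_enum (T : finType) (x : T) : List.In x (enum T).
Proof.
have : x \in enum T by rewrite mem_enum.
by elim: (enum T) => //= y s IH; rewrite in_cons => /orP [/eqP ->|/IH]; [left | right].
Qed.

Lemma finset_of_pred (T : finType) (P : T -> Prop) :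
  exists J : {set T}, forall x, x \in J <-> P x.
Proof.
exists [set x | if excluded_middle_informative (P x) then true else false] => x.
by rewrite inE; case: excluded_middle_informative.
Qed.

Lemma multiplicity_free_verbal_finite m nu : multiplicity_free (@ftrunc m nu) ->
  exists hs : seq (series m -> Prop), forall h, verbal h -> psubset (@fge m nu.+1) h ->
    exists2 h', List.In h' hs & forall a, h a <-> h' a.
Proof.
case=> k [W [W_irr_trunc W_span _ W_noniso]].
have W_irr i := (W_irr_trunc i).1.
exists (List.map (span_components nu W) (enum {set 'I_k})) => h hv h_ge.
have [J J_h] := finset_of_pred (fun i => psubset (W i) h).
exists (span_components nu W J); first exact/List.in_map/In_enum.
exact: verbal_span_components.
Qed.

Section VerbalTopDegree.
Variables (m nu : nat).
Implicit Types (a b u : series m) (h U : series m -> Prop).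

Lemma verbal_top_degree_decomposition h :
  verbal h -> psubset (@fge m nu.+1) h -> psubset h (@fge m nu) ->
  forall a, h a <-> exists u, exists2 b, (h u /\ fdeg nu u) /\ fge nu.+1 b & a = sadd u b.
Proof.
move=> [h_ideal _] h_ge h_le a; have [h_sub _ _] := h_ideal.
split=> [ha|[u [b [[hu _] hb] ->]]]; last by apply: subspaceD => //; apply: h_ge.
have [fa a_nu] := h_le a ha.
have b_ge : fge nu.+1 (ssub a (hcomp nu a)).
  split=> [|w]; first by apply: free_lie_sub => //; apply: free_lie_hcomp.
  rewrite ltnS leq_eqVlt /ssub /hcomp => /orP [->|w_lt]; first by rewrite subrr.
  by rewrite a_nu // ltn_eqF // subr0.
exists (hcomp nu a), (ssub a (hcomp nu a)); last by rewrite saddC ssubK.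
split=> //; split; last by split; [apply: free_lie_hcomp | apply: homog_hcomp].
by rewrite -[hcomp nu a](ssubKr a); apply: subspaceB => //; apply: h_ge.
Qed.

Lemma verbal_of_gl_invariant_fdeg h U :
  is_ideal h -> is_subspace U -> psubset U (@fdeg m nu) -> gl_invariant U ->
  (forall a, h a <-> exists u, exists2 b, U u /\ fge nu.+1 b & a = sadd u b) ->
  [/\ verbal h, psubset (@fge m nu.+1) h & psubset h (@fge m nu)].
Proof.
move=> h_ideal U_sub U_deg U_inv hE; split.
- split=> // phi phi_endo _ /hE [u [b [Uu [fb b_ge]] ->]].
  have [fu u_nu] := U_deg u Uu; set L := linear_part phi.
  apply/hE; exists (gl_act L u), (sadd (ssub (phi u) (gl_act L u)) (phi b)).
    split.
      apply: (@gl_invariant_mx_act m nu) Uu => // v /U_deg [_ v_nu] w w_nu.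
      by rewrite v_nu // neq_ltn w_nu orbT.
    split.
      by apply: fl_add; [apply: free_lie_sub | ]; 
        [apply: lie_endo_free | apply: free_lie_gl_act | apply: lie_endo_free].
    move=> w w_nu; rewrite /sadd (lie_endo_vanish_below phi_endo fb b_ge) // addr0.
    by rewrite /ssub gl_actE (lie_endo_agree_linear_part phi_endo fu u_nu) ?subrr.
  by rewrite lie_endoD // saddA [sadd (gl_act L u) _]saddC ssubK.
- move=> a ha; apply/hE; exists (@szero m), a; last by rewrite add0s.
  by split=> //; apply: subspace0.
- move=> a /hE [u [b [Uu [fb b_ge]] ->]]; have [fu u_nu] := U_deg u Uu.
  split=> [|w w_lt]; first exact: fl_add.
  by rewrite /sadd b_ge ?u_nu ?addr0 ?(ltn_eqF w_lt) // ltnW.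
Qed.

End VerbalTopDegree.

Unset Implicit Arguments.
Theorem proposition2p9 (m nu : nat) (hnu : (1 <= nu)%N) :
  [/\
   (* (1) *)
   forall h : series m -> Prop, verbal h -> psubset (@fge m nu.+1) h ->
     forall g : 'M[C]_m, g \in unitmx -> forall a, h a ->
       (exists2 b, h b & fge nu.+1 (ssub (gl_act g a) b)),
   (* (2) *)
   multiplicity_free (@ftrunc m nu) ->
     exists hs : seq (series m -> Prop),
       forall h : series m -> Prop, verbal h -> psubset (@fge m nu.+1) h ->
         exists2 h', List.In h' hs & forall a, h a <-> h' a
  & (* (3) *)
   forall h : series m -> Prop,
     (verbal h /\ psubset (@fge m nu.+1) h /\ psubset h (@fge m nu)) <->
     (is_ideal h /\
      exists U : series m -> Prop,
        [/\ is_subspace U, psubset U (@fdeg m nu), gl_invariant U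
          & forall a, h a <-> exists u, exists2 b, U u /\ fge nu.+1 b & a = sadd u b])].
Proof.
split.
- move=> h hv _ g gu a ha; exists (gl_act g a); first exact: verbal_gl_invariant hv g gu a ha.
  by rewrite ssubxx; apply: fge0.
- exact: multiplicity_free_verbal_finite.
- move=> h; split=> [[hv [h_ge h_le]]|[h_ideal [U [U_sub U_deg U_inv hE]]]].
    split; first by case: hv.
    exists (fun a => h a /\ fdeg nu a); split.
    + exact: subspaceI (verbal_subspace hv) (fdeg_subspace m nu).
    + by move=> a [].
    + exact: gl_invariantI (verbal_gl_invariant hv) (@fdeg_gl_invariant m nu).
    + exact: verbal_top_degree_decomposition.
  by have [] := verbal_of_gl_invariant_fdeg h_ideal U_sub U_deg U_inv hE.
Qed.
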